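(* Let $d\ge1$, $\mathcal{X}=\mathbb{R}^d$, starting point $x_0=\mathbf{0}$, and $0<\mu\le L$. There exists a sequence of differentiable functions $f_1,\dots,f_T:\mathbb{R}^d\to[0,\infty)$, each satisfying $\frac{\mu}{2}\|y-x\|^2\le f_t(y)-f_t(x)-\langle\nabla f_t(x),y-x\rangle\le\frac{L}{2}\|y-x\|^2$ for all $x,y$, such that the OMGD algorithm with $K=\lceil\frac{L+\mu}{2\mu}\ln4\rceil$ satisfies $$\frac{C_{\mathcal{A}_o}}{C_{\mathsf{OPT}}}\ge 1+\frac{L+1}{4\mu}+\frac{L+1}{8}.$$
   Context: Quadratic-switching cost of $(y_1,\dots,y_T)$ with $y_0=x_0$: $\sum_{t=1}^T\big(f_t(y_t)+\frac12\|y_t-y_{t-1}\|^2\big)$; $C_{\mathsf{OPT}}$ is its minimum over all sequences. The OMGD algorithm with parameter $K$ produces $x_1=x_0$ and, for $t=2,\dots,T$: $z_t^{(0)}=x_{t-1}$, $z_t^{(k)}=\Pi_{\mathcal{X}}\big(z_t^{(k-1)}-\frac1L\nabla f_{t-1}(z_t^{(k-1)})\big)$ for $k=1,\dots,K$, and $x_t=z_t^{(K)}$ ($\Pi_{\mathcal{X}}$ is Euclidean projection, here the identity). $C_{\mathcal{A}_o}$ is the quadratic-switching cost of $(x_1,\dots,x_T)$. *)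

From HB Require Import structures.
From mathcomp Require Import all_boot all_order all_algebra.
From mathcomp Require Import all_classical all_reals all_analysis.
Set Implicit Arguments. Unset Strict Implicit. Unset Printing Implicit Defensive.
Import Order.TTheory GRing.Theory Num.Theory.
Import numFieldNormedType.Exports.
Local Open Scope ring_scope.

Section Defs.
Variables (R : realType) (d : nat).

Definition dotv (u v : 'rV[R]_d) : R := \sum_(i < d) u 0 i * v 0 i.
Definition sqnorm (v : 'rV[R]_d) : R := dotv v v.

Definition grad (f : 'rV[R]_d -> R) (x : 'rV[R]_d) : 'rV[R]_d :=
  \row_(i < d) ('d f x (delta_mx 0 i : 'rV[R]_d)).

Definition sc_smooth (mu L : R) (f : 'rV[R]_d -> R) : Prop :=
  forall x y : 'rV[R]_d,
    mu / 2 * sqnorm (y - x) <= f y - f x - dotv (grad f x) (y - x)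
    /\ f y - f x - dotv (grad f x) (y - x) <= L / 2 * sqnorm (y - x).

(* quadratic-switching cost of (y_1,...,y_T) with y_0 = x0; the functions
   are f 1, ..., f T (index 0 unused) *)
Definition qcost (f : nat -> 'rV[R]_d -> R) (x0 : 'rV[R]_d) (T : nat)
    (y : nat -> 'rV[R]_d) : R :=
  \sum_(1 <= t < T.+1)
     (f t (y t) + 1/2 * sqnorm (y t - (if t == 1%N then x0 else y t.-1))).

Definition COPT (f : nat -> 'rV[R]_d -> R) (x0 : 'rV[R]_d) (T : nat) : R :=
  inf [set qcost f x0 T y | y in [set: nat -> 'rV[R]_d]].

(* one (unprojected, X = R^d) gradient step with step size 1/L *)
Definition gd_step (g : 'rV[R]_d -> R) (L : R) (z : 'rV[R]_d) : 'rV[R]_d :=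
  z - L^-1 *: grad g z.

Fixpoint omgd (f : nat -> 'rV[R]_d -> R) (L : R) (K : nat) (x0 : 'rV[R]_d)
    (t : nat) : 'rV[R]_d :=
  match t with
  | 0%N => x0
  | s.+1 => match s with
            | 0%N => x0
            | _ => iter K (gd_step (f s) L) (omgd f L K x0 s)
            end
  end.

Definition COMGD (f : nat -> 'rV[R]_d -> R) (L : R) (K : nat)
    (x0 : 'rV[R]_d) (T : nat) : R :=
  qcost f x0 T (omgd f L K x0).

End Defs.

(* Two rounds suffice.  With e a unit vector, let f_1 = mu/2 |x - e|^2 and
   f_2 = L/2 |x|^2.  OMGD pays f_1(0) = mu/2 in round 1 and then, after K
   gradient steps on f_1 started at 0, sits at s e with s = 1 - (1 - mu/L)^K.
   Since (1 - mu/L)^K <= exp(-K mu/L) <= 1/2 by the choice of K, s >= 1/2 and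
   round 2 costs at least (L + 1)/8.  The offline sequence (mu/(mu+2) e, 0)
   costs only mu/(mu+2), while every sequence costs at least mu/(2(mu+1)) > 0;
   dividing gives the ratio. *)

From HB Require Import structures.
From mathcomp Require Import all_boot all_order all_algebra.
From mathcomp Require Import all_classical all_reals all_analysis.
From mathcomp Require Import ring lra.
Import Order.TTheory GRing.Theory Num.Theory.
Import numFieldNormedType.Exports.
Local Open Scope ring_scope.

Set Implicit Arguments.
Unset Strict Implicit.
Unset Printing Implicit Defensive.

Section Differentiation.
Variable R : realType.

Lemma is_diff_coord m n (M : 'M[R]_(m, n)) i j :
  is_diff M (fun N : 'M[R]_(m, n) => N i j) (fun N => N i j).
Proof.
have coord_lin : linear (fun N : 'M[R]_(m, n) => N i j).
  by move=> k A B; rewrite !mxE.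
pose coord : {linear 'M[R]_(m, n) -> R} :=
  HB.pack (fun N : 'M[R]_(m, n) => N i j) (GRing.isLinear.Build _ _ _ _ _ coord_lin).
rewrite (_ : (fun N : 'M[R]_(m, n) => N i j) = coord) //.
apply: DiffDef; first exact/linear_differentiable/coord_continuous.
by rewrite diff_lin //; apply: coord_continuous.
Qed.

Lemma is_diff_sum (V W : normedModType R) n (F dF : 'I_n -> V -> W) (x : V) :
  (forall i, is_diff x (F i) (dF i)) -> is_diff x (\sum_i F i) (\sum_i dF i).
Proof.
move=> dF_F; apply: (big_ind2 (fun f df => is_diff x f df)) => //.
- exact: is_diff_cst.
- by move=> f1 f2 df1 df2 d1 d2; apply: is_diffD.
Qed.

End Differentiation.

Section QuadraticFunctions.
Variables (R : realType) (d : nat).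
Local Notation V := 'rV[R]_d.

Lemma sqnorm_ge0 (u : V) : 0 <= sqnorm u.
Proof. by apply: sumr_ge0 => i _; rewrite -expr2 sqr_ge0. Qed.

Lemma sqnorm0 : sqnorm (0 : V) = 0.
Proof. by rewrite /sqnorm /dotv big1 // => i _; rewrite mxE mulr0. Qed.

Lemma sqnormZ k (u : V) : sqnorm (k *: u) = k ^+ 2 * sqnorm u.
Proof.
by rewrite /sqnorm /dotv mulr_sumr; apply: eq_bigr => i _; rewrite !mxE; ring.
Qed.

Lemma sqnormN (u : V) : sqnorm (- u) = sqnorm u.
Proof. by rewrite -scaleN1r sqnormZ sqrrN expr1n mul1r. Qed.

Lemma sqr_coord_le_sqnorm (u : V) j : u 0 j ^+ 2 <= sqnorm u.
Proof.
rewrite /sqnorm /dotv (bigD1 j) //= expr2 lerDl.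
by apply: sumr_ge0 => i _; rewrite -expr2 sqr_ge0.
Qed.

Lemma dotv_delta (u : V) j : dotv u (delta_mx 0 j) = u 0 j.
Proof.
rewrite /dotv (bigD1 j) //= big1 ?addr0; first by rewrite mxE !eqxx mulr1.
by move=> i /negbTE ij; rewrite mxE ij andbF mulr0.
Qed.

Lemma sqnorm_delta j : sqnorm (delta_mx 0 j : V) = 1.
Proof. by rewrite /sqnorm dotv_delta mxE !eqxx. Qed.

Definition quad (c : R) (a : V) (x : V) : R := c / 2 * sqnorm (x - a).

Lemma quadE c a :
  quad c a = (c / 2) *: \sum_(i < d) ((fun N : V => N 0 i) - cst (a 0 i)) ^+ 2.
Proof.
apply/funext => x; rewrite /quad /sqnorm /dotv /= fct_sumE.
by congr (_ * _); apply: eq_bigr => i _; rewrite !mxE /= expr2.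
Qed.

Lemma is_diff_quad c a x : is_diff x (quad c a) (fun v => c * dotv (x - a) v).
Proof.
rewrite quadE; apply: is_diff_eq.
  apply/is_diffZ/is_diff_sum => i.
  by apply/is_diffX/is_diffB; exact: is_diff_coord.
apply/funext => v; rewrite scalrfctE fct_sumE /= scaler_sumr /dotv mulr_sumr.
apply: eq_bigr => i _; rewrite scalrfctE !fctE /= !mxE subr0 expr1.
by rewrite scalerA /GRing.scale /=; field.
Qed.

Lemma differentiable_quad c a x : differentiable (quad c a) x.
Proof. by have dq := is_diff_quad c a x. Qed.

Lemma grad_quad c a x : grad (quad c a) x = c *: (x - a).
Proof.
have dq := is_diff_quad c a x.
by apply/rowP => j; rewrite !mxE diff_val dotv_delta !mxE.
Qed.

Lemma quad_expansion c a x y :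
  quad c a y - quad c a x - dotv (grad (quad c a) x) (y - x)
  = c / 2 * sqnorm (y - x).
Proof.
rewrite grad_quad /quad /sqnorm /dotv !mulr_sumr -!sumrB.
by apply: eq_bigr => i _; rewrite !mxE; field.
Qed.

Lemma sc_smooth_quad mu L c a : mu <= c <= L -> sc_smooth mu L (quad c a).
Proof.
move=> /andP[mu_c c_L] x y; rewrite quad_expansion.
by have := sqnorm_ge0 (y - x); split; nra.
Qed.

Lemma quad_ge0 c a x : 0 <= c -> 0 <= quad c a x.
Proof. by move=> c_ge0; have := sqnorm_ge0 (x - a); rewrite /quad; nra. Qed.

Lemma iter_gd_step_quad L c a z k : L != 0 ->
  iter k (gd_step (quad c a) L) z = a + (1 - c / L) ^+ k *: (z - a).
Proof.
move=> L_neq0; elim: k => [|k IH]; first by rewrite expr0 scale1r addrC subrK.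
rewrite iterS IH /gd_step grad_quad; apply/rowP => j; rewrite !mxE exprS.
by field.
Qed.

End QuadraticFunctions.

Section Costs.
Variables (R : realType) (d : nat).
Implicit Types (f : nat -> 'rV[R]_d -> R) (x : 'rV[R]_d) (y : nat -> 'rV[R]_d).

Lemma qcost2E f x y :
  qcost f x 2 y = f 1%N (y 1%N) + 1/2 * sqnorm (y 1%N - x)
                 + (f 2%N (y 2%N) + 1/2 * sqnorm (y 2%N - y 1%N)).
Proof. by rewrite /qcost big_nat_recl // big_nat_recl // big_geq //= addr0. Qed.

Lemma qcost_ge0 f x T y : (forall t u, 0 <= f t u) -> 0 <= qcost f x T y.
Proof.
move=> f_ge0; apply: sumr_ge0 => t _; apply: addr_ge0 => //.
by apply: mulr_ge0; [lra | exact: sqnorm_ge0].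
Qed.

Lemma COPT_le_qcost f x T y :
  (forall t u, 0 <= f t u) -> COPT f x T <= qcost f x T y.
Proof.
move=> f_ge0; apply: ge_inf; last by exists y.
by exists 0 => _ [z _ <-]; exact: qcost_ge0.
Qed.

Lemma lb_le_COPT f x T b :
  (forall y, b <= qcost f x T y) -> b <= COPT f x T.
Proof.
move=> b_le; apply: lb_le_inf; first by exists (qcost f x T (fun=> 0)), (fun=> 0).
by move=> _ [y _ <-].
Qed.

End Costs.

Section Contraction.
Variable R : realType.

Lemma exprn_le_expR (q : R) k :
  q <= 1 -> (1 - q) ^+ k <= expR (- (k%:R * q)).
Proof.
move=> q_le1; rewrite -mulrN expRM_natl.
apply: lerXn2r; rewrite ?nnegrE ?expR_ge0 ?subr_ge0 //.
by have := expR_ge1Dx (- q); lra.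
Qed.

Lemma contraction_factor_le_half (mu L : R) : 0 < mu -> mu <= L ->
  (1 - mu / L) ^+ `| Num.ceil ((L + mu) / (2 * mu) * ln 4) |%N <= 1 / 2.
Proof.
move=> mu_gt0 mu_le_L; have L_gt0 : 0 < L by apply: lt_le_trans mu_le_L.
set q := mu / L; set z := (L + mu) / (2 * mu) * ln 4.
set K := `| Num.ceil z |%N.
have q_gt0 : 0 < q by apply: divr_gt0.
have q_le1 : q <= 1 by rewrite /q ler_pdivrMr // mul1r.
have ln2_ge0 : 0 <= ln (2 : R) by apply: ln_ge0; lra.
have ln4 : ln (4 : R) = 2 * ln 2.
  by rewrite (_ : 4 = 2 ^+ 2) ?lnXn ?mulr_natl //; lra.
have z_ge0 : 0 <= z.
  by rewrite /z ln4; apply: mulr_ge0; [apply: divr_ge0; lra | lra].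
have z_le_K : z <= K%:R.
  by rewrite /K natr_absz ger0_norm ?ceil_ge // ceil_ge0; lra.
have zq : z * q = (1 + q) * ln 2.
  by rewrite /z /q ln4; field; rewrite !gt_eqF.
have ln2_le_Kq : ln 2 <= K%:R * q.
  have : z * q <= K%:R * q by apply: ler_wpM2r; lra.
  by rewrite zq; nra.
apply: le_trans (exprn_le_expR K q_le1) _.
rewrite -[1 / 2](@lnK _ (1 / 2)) ?posrE // ler_expR ln_div ?posrE // ln1; lra.
Qed.

End Contraction.

Section HardInstance.
Variables (R : realType) (d : nat) (mu L : R) (j : 'I_d).
Hypotheses (mu_gt0 : 0 < mu) (mu_le_L : mu <= L).
Local Notation e := (delta_mx 0 j : 'rV[R]_d).

Definition hard_instance (t : nat) : 'rV[R]_d -> R :=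
  if t == 1%N then quad mu e else quad L 0.

Let L_gt0 : 0 < L. Proof. exact: lt_le_trans mu_le_L. Qed.

Lemma hard_instance_ge0 t x : 0 <= hard_instance t x.
Proof.
by rewrite /hard_instance; case: ifP => _; apply/quad_ge0/ltW.
Qed.

Lemma differentiable_hard_instance t x : differentiable (hard_instance t) x.
Proof. by rewrite /hard_instance; case: ifP => _; apply: differentiable_quad. Qed.

Lemma sc_smooth_hard_instance t : sc_smooth mu L (hard_instance t).
Proof.
by rewrite /hard_instance; case: ifP => _; apply: sc_smooth_quad; rewrite lexx ?andbT.
Qed.

Lemma omgd_hard_instance K :
  omgd hard_instance L K 0 2 = (1 - (1 - mu / L) ^+ K) *: e.
Proof.
rewrite /= iter_gd_step_quad ?gt_eqF //.
by apply/rowP => k; rewrite !mxE; ring.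
Qed.

Lemma COMGD_hard_instance K :
  COMGD hard_instance L K 0 2
  = mu / 2 + (L + 1) / 2 * (1 - (1 - mu / L) ^+ K) ^+ 2.
Proof.
rewrite /COMGD qcost2E omgd_hard_instance /hard_instance /= /quad.
rewrite subrr !subr0 sub0r sqnormN sqnormZ sqnorm_delta sqnorm0.
by ring.
Qed.

Lemma scalar_cost_ge (a : R) : mu / (2 * (mu + 1)) <= mu / 2 * (a - 1) ^+ 2 + a ^+ 2 / 2.
Proof.
have mu1_gt0 : 0 < mu + 1 by have := mu_gt0; lra.
rewrite -subr_ge0.
have -> : mu / 2 * (a - 1) ^+ 2 + a ^+ 2 / 2 - mu / (2 * (mu + 1))
          = ((mu + 1) * a - mu) ^+ 2 / (2 * (mu + 1)).
  by field; rewrite gt_eqF.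
by apply: divr_ge0; [exact: sqr_ge0 | lra].
Qed.

Lemma qcost_hard_instance_ge y :
  mu / (2 * (mu + 1)) <= qcost hard_instance 0 2 y.
Proof.
rewrite qcost2E /hard_instance /= /quad !subr0.
pose a : R := y 1%N 0 j.
have a1_le : (a - 1) ^+ 2 <= sqnorm (y 1%N - e).
  by have := sqr_coord_le_sqnorm (y 1%N - e) j; rewrite !mxE !eqxx.
have a_le : a ^+ 2 <= sqnorm (y 1%N) by exact: sqr_coord_le_sqnorm.
have := scalar_cost_ge a.
have : mu / 2 * (a - 1) ^+ 2 <= mu / 2 * sqnorm (y 1%N - e).
  by apply: ler_wpM2l => //; have := mu_gt0; lra.
have : 0 <= L / 2 * sqnorm (y 2%N).
  by apply: mulr_ge0; [have := L_gt0; lra | exact: sqnorm_ge0].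
have := sqnorm_ge0 (y 2%N - y 1%N).
lra.
Qed.

Lemma COPT_hard_instance_gt0 : 0 < COPT hard_instance 0 2.
Proof.
apply: lt_le_trans (lb_le_COPT qcost_hard_instance_ge).
by apply: divr_gt0 => //; have := mu_gt0; lra.
Qed.

Lemma qcost_hard_instance_witness :
  qcost hard_instance 0 2 (fun t => if t == 1%N then (mu / (mu + 2)) *: e else 0)
  = mu / (mu + 2).
Proof.
rewrite qcost2E /hard_instance /= /quad subrr !subr0 sub0r sqnormN.
rewrite -[X in _ - X]scale1r -scalerBl !sqnormZ sqnorm_delta sqnorm0.
by field; have := mu_gt0; lra.
Qed.

Lemma COPT_hard_instance_le : COPT hard_instance 0 2 <= mu / (mu + 2).
Proof.
rewrite -[leRHS]qcost_hard_instance_witness.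
exact: COPT_le_qcost hard_instance_ge0.
Qed.

Lemma competitive_ratio_ge (s P : R) : 1 / 2 <= s -> 0 < P -> P <= mu / (mu + 2) ->
  1 + (L + 1) / (4 * mu) + (L + 1) / 8 <= (mu / 2 + (L + 1) / 2 * s ^+ 2) / P.
Proof.
move=> s_ge P_gt0 P_le; have mu0 := mu_gt0; have L0 := L_gt0.
set r := 1 + (L + 1) / (4 * mu) + (L + 1) / 8.
have r_gt0 : 0 < r.
  have : 0 <= (L + 1) / (4 * mu) by apply: divr_ge0; lra.
  have : 0 <= (L + 1) / 8 by apply: divr_ge0; lra.
  rewrite /r; lra.
have r_mu : r * (mu / (mu + 2)) = mu / 2 + (L + 1) / 8 - mu ^+ 2 / (2 * (mu + 2)).
  by rewrite /r; field; rewrite !gt_eqF //; lra.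
have mu2_ge0 : 0 <= mu ^+ 2 / (2 * (mu + 2)).
  by apply: divr_ge0; [exact: sqr_ge0 | lra].
have Ls_ge : (L + 1) / 8 <= (L + 1) / 2 * s ^+ 2.
  have s2 : 1 / 4 <= s ^+ 2 by rewrite expr2; nra.
  have : (L + 1) / 2 * (1 / 4) <= (L + 1) / 2 * s ^+ 2 by apply: ler_wpM2l; lra.
  lra.
have rP_le : r * P <= r * (mu / (mu + 2)) by apply: ler_wpM2l; lra.
rewrite ler_pdivlMr //; lra.
Qed.

End HardInstance.

Unset Implicit Arguments.

Theorem lemma6 (R : realType) (d : nat) (mu L : R) :
  (1 <= d)%N -> 0 < mu -> mu <= L ->
  exists (T : nat) (f : nat -> 'rV[R]_d -> R),
    (1 <= T)%N /\
    (forall t, (1 <= t <= T)%N ->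
       [/\ forall x, differentiable (f t) x,
           forall x, 0 <= f t x &
           sc_smooth mu L (f t)]) /\
    let K := `| Num.ceil ((L + mu) / (2 * mu) * ln 4) |%N in
    0 < COPT f 0 T /\
    COMGD f L K 0 T / COPT f 0 T >= 1 + (L + 1) / (4 * mu) + (L + 1) / 8.
Proof.
move=> d_gt0 mu_gt0 mu_le_L.
pose f := hard_instance mu L (Ordinal d_gt0).
exists 2%N, f; split=> //; split.
  move=> t _; split; [exact: differentiable_hard_instance |
    exact: hard_instance_ge0 | exact: sc_smooth_hard_instance].
move=> K; split; first exact: COPT_hard_instance_gt0.
rewrite COMGD_hard_instance //; apply: competitive_ratio_ge => //.
- by have := contraction_factor_le_half mu_gt0 mu_le_L; lra.
- exact: COPT_hard_instance_gt0.
- exact: COPT_hard_instance_le.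
Qed.
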